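(* Let $L\in\mathbb{N}$, $\alpha>0$, and let $\widetilde{ALG}$ be an online block packing algorithm with the following guarantee for capacities $\tilde B=(\tilde B_j)$: on every instance with $\tilde q_{\max}:=\max_{i,j}w_{ij}/\tilde B_j\le\alpha$, its output $\tilde x$ has average block size $\tilde B$ with slackness $\tilde\Delta$, and for every horizon $\tilde T$ and every allocation $\tilde y$ respecting per-block limits $\tilde B_j$, $SW_{[1:\tilde T+\tilde\Gamma]}(\tilde x)\ge\tilde\lambda\,SW_{[1:\tilde T]}(\tilde y)$. Let $B_j=\tilde B_j/L$. Then on every instance with $q_{\max}:=\max_{i,j}w_{ij}/B_j\le\alpha L$, the batching algorithm with parameter $L$ using $\widetilde{ALG}$ as oracle outputs an allocation $x$ of average block size $B=(B_j)$ with slackness $\Delta=(\tilde\Delta+1)L$ such that for every horizon $T$ and every allocation $y$ respecting per-block limits $B_j$, $$SW_{[1:T+\Gamma]}(x)\ge(1-\rho_{\max})^{L-1}\tilde\lambda\,SW_{[1:T]}(y),\qquad\Gamma=(\tilde\Gamma+1)L,$$ where $\rho_{\max}=\max_i\rho_i$. This holds both when the comparison allocations $\tilde y,y$ range over integral allocations and when they range over fractional allocations.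
   Context: Online block packing: $m$ resources; transactions $i$ with arrival time $a_i\in\{1,2,\dots\}$, base value $v_i\ge0$, discount $\rho_i\in[0,1]$, demand $w_i\in\mathbb{R}_+^m$; value in block $t\ge a_i$ is $v_i^t=v_i(1-\rho_i)^{t-a_i}$. An allocation is $x=\{x_i^t\}$ with $x_i^t\in[0,1]$ ($\{0,1\}$ if integral), $x_i^t=0$ for $t<a_i$, $\sum_tx_i^t\le1$; it respects per-block limits $B_j$ if $\sum_iw_{ij}x_i^t\le B_j$ for all $t,j$; it has average block size $B$ with slackness $\Delta$ if for all $T_0,K\ge1$ and $j$, $\sum_{t=T_0}^{T_0+K-1}\sum_ix_i^tw_{ij}\le(K+\Delta)B_j$. $SW_{[1:T]}(x)=\sum_{t=1}^T\sum_ix_i^tv_i^t$. An online algorithm decides block $t$ using only transactions with $a_i\le t$. Batching algorithm with parameter $L$: for each block $t$, if $t$ is not a multiple of $L$ the block is empty ($x_i^t=0$ for all $i$); if $t=\tilde tL$, the batch $\tilde A_{\tilde t}=\{i:t-L<a_i\le t\}$ is fed to $\widetilde{ALG}$ as the transactions arriving at its time step $\tilde t$, where transaction $i$ is given base value $\tilde v_i=v_i(1-\rho_i)^{\tilde tL-a_i}$, discount factor $\tilde\rho_i=1-(1-\rho_i)^L$ and the same demand $w_i$; $\widetilde{ALG}$'s block $\tilde t$ output $\tilde x_i^{\tilde t}$ is used as $x_i^t=\tilde x_i^{\tilde t}$. *)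

From HB Require Import structures.
From mathcomp Require Import all_boot all_order all_algebra.
Set Implicit Arguments. Unset Strict Implicit. Unset Printing Implicit Defensive.
Import Order.TTheory GRing.Theory Num.Theory.
Local Open Scope ring_scope.

Section BlockPacking.
Variable R : realFieldType.
Variable m : nat.

(* An instance with n transactions indexed by 'I_n: arrival time a_i,
   base value v_i, discount rho_i, demand w_i in R_+^m. *)
Record instance (n : nat) := Instance {
  arr : 'I_n -> nat;
  bval : 'I_n -> R;
  disc : 'I_n -> R;
  dem : 'I_n -> 'I_m -> R }.

Definition valid_instance n (I : instance n) : Prop :=
  forall i, (1 <= arr I i)%N /\ 0 <= bval I i /\ 0 <= disc I i <= 1 /\
            (forall j, 0 <= dem I i j).

(* v_i^t = v_i (1 - rho_i)^(t - a_i)  (only used for t >= a_i) *)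
Definition value n (I : instance n) (i : 'I_n) (t : nat) : R :=
  bval I i * (1 - disc I i) ^+ (t - arr I i).

(* allocation x_i^t (blocks t = 1, 2, ...); integral = true requires {0,1} *)
Definition is_allocation (integral : bool) n (I : instance n)
    (x : 'I_n -> nat -> R) : Prop :=
  (forall i t, 0 <= x i t <= 1) /\
  (integral -> forall i t, x i t = 0 \/ x i t = 1) /\
  (forall i t, (t < arr I i)%N -> x i t = 0) /\
  (forall i N, \sum_(t < N) x i t <= 1).

Definition respects_limits n (I : instance n) (B : 'I_m -> R)
    (x : 'I_n -> nat -> R) : Prop :=
  forall t j, \sum_i dem I i j * x i t <= B j.

Definition avg_block_size n (I : instance n) (B : 'I_m -> R) (Delta : R)
    (x : 'I_n -> nat -> R) : Prop :=
  forall T0 K j, (1 <= T0)%N -> (1 <= K)%N ->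
    \sum_(T0 <= t < T0 + K) \sum_i x i t * dem I i j <= (K%:R + Delta) * B j.

Definition SW n (I : instance n) (x : 'I_n -> nat -> R) (T : nat) : R :=
  \sum_(1 <= t < T.+1) \sum_i x i t * value I i t.

Definition qmax_le n (I : instance n) (B : 'I_m -> R) (a : R) : Prop :=
  forall i j, dem I i j / B j <= a.

Definition rho_max n (I : instance n) : R := \big[Num.max/0]_i disc I i.

Definition algorithm := forall n, instance n -> 'I_n -> nat -> R.

Definition online (ALG : algorithm) : Prop :=
  forall n (I I' : instance n) t,
    (forall i, (arr I i <= t)%N = (arr I' i <= t)%N) ->
    (forall i, (arr I i <= t)%N ->
       [/\ arr I i = arr I' i, bval I i = bval I' i, disc I i = disc I' i
         & dem I i = dem I' i]) ->
    forall i, ALG n I i t = ALG n I' i t.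

(* the batched instance: transaction i belongs to batch ta_i = ceil(a_i/L),
   i.e. ta_i L - L < a_i <= ta_i L *)
Definition batch_arr (L : nat) n (I : instance n) (i : 'I_n) : nat :=
  ((arr I i + L.-1) %/ L)%N.

Definition batch_inst (L : nat) n (I : instance n) : instance n :=
  Instance (batch_arr L I)
    (fun i => bval I i * (1 - disc I i) ^+ (batch_arr L I i * L - arr I i))
    (fun i => 1 - (1 - disc I i) ^+ L)
    (dem I).

Definition batching (ALG : algorithm) (L : nat) n (I : instance n)
    : 'I_n -> nat -> R :=
  fun i t => if (L %| t)%N then ALG n (batch_inst L I) i (t %/ L)%N else 0.

End BlockPacking.

From HB Require Import structures.
From mathcomp Require Import all_boot all_order all_algebra.
From mathcomp Require Import zify ring lra.
Set Implicit Arguments. Unset Strict Implicit. Unset Printing Implicit Defensive.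
Import Order.TTheory GRing.Theory Num.Theory.
Local Open Scope ring_scope.

(* Batch k collects the transactions arriving in blocks (k-1)L+1, ..., kL and
   is served in block kL.  Measured per batch, a transaction of discount rho
   loses the factor (1-rho)^L, so the oracle's output, stretched back to the
   blocks L, 2L, ..., earns in the original instance exactly its welfare in the
   batched instance.  Conversely, summing an allocation y within the limits B
   over each window of L consecutive blocks gives an allocation of the batched
   instance within the limits L B; it serves every unit of y at most L-1 blocks
   later, hence loses at most the factor (1 - rho_max)^(L-1).  The oracle's
   guarantee, with the horizon rounded up to a multiple of L, gives the welfare
   bound; a window of K blocks meets at most K/L + 1 batch blocks, which gives
   the slackness. *)

Definition cdivn (L a : nat) : nat := ((a + L.-1) %/ L)%N.

Section CeilingDivision.
Variable L : nat.
Hypothesis L_gt0 : (0 < L)%N.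

Lemma leq_cdivnL a k : (cdivn L a <= k)%N = (a <= k * L)%N.
Proof. by rewrite -ltnS ltn_divLR // mulSn; apply/idP/idP; lia. Qed.

Lemma cdivnM_ge a : (a <= cdivn L a * L)%N.
Proof. by rewrite -leq_cdivnL. Qed.

Lemma cdivnM_le a : (cdivn L a * L <= a + L.-1)%N.
Proof. exact: leq_divM. Qed.

Lemma cdivn_mulnK k : cdivn L (k * L)%N = k.
Proof. by rewrite /cdivn divnMDl // divn_small ?addn0 // prednK. Qed.

Lemma cdiv0n : cdivn L 0%N = 0%N.
Proof. exact: (cdivn_mulnK 0). Qed.

Lemma cdivnS a : cdivn L a.+1 = (cdivn L a + (L %| a))%N.
Proof.
by rewrite /cdivn addSn divnS // -addnS prednK // dvdn_addl ?dvdnn // addnC.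
Qed.

Lemma sum_on_multiples (V : nmodType) (f : nat -> V) a b : (a <= b)%N ->
  \sum_(a <= t < b) (if (L %| t)%N then f (t %/ L)%N else 0)
  = \sum_(cdivn L a <= k < cdivn L b) f k.
Proof.
elim: b => [|b IH]; first by rewrite leqn0 => /eqP ->; rewrite !big_geq.
rewrite leq_eqVlt => /orP [/eqP -> | ]; first by rewrite !big_geq.
rewrite ltnS => le_ab; rewrite big_nat_recr //= IH // cdivnS.
case: ifP => [/dvdnP [q b_eq] | _]; last by rewrite addn0 addr0.
rewrite b_eq mulnK // cdivn_mulnK addn1 big_nat_recr //=.
by rewrite leq_cdivnL -b_eq.
Qed.

End CeilingDivision.

Lemma sum_nat_blocks (V : nmodType) (g : nat -> V) L K :
  \sum_(1 <= t < (K * L)%N.+1) g t =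
  \sum_(1 <= k < K.+1) \sum_((k.-1 * L)%N.+1 <= t < (k * L)%N.+1) g t.
Proof.
elim: K => [|K IH]; first by rewrite mul0n !big_geq.
rewrite [RHS]big_nat_recr //= -IH (big_cat_nat _ (n := (K * L).+1)) //=.
by rewrite ltnS mulSn leq_addl.
Qed.

Lemma sum_zero_one (R : numDomainType) (T : Type) (r : seq T) (f : T -> R) :
  (forall i, f i = 0 \/ f i = 1) -> \sum_(i <- r) f i <= 1 ->
  \sum_(i <- r) f i = 0 \/ \sum_(i <- r) f i = 1.
Proof.
move=> f01; have -> : \sum_(i <- r) f i = (count (fun i => f i == 1) r)%:R.
  elim: r => [|i r IH]; first by rewrite big_nil.
  by rewrite big_cons IH /=; case: (f01 i) => ->;
    rewrite ?eqxx ?natrD // eq_sym oner_eq0 add0r.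
by rewrite lern1; case: count => [|[|]] //; [left | right].
Qed.

Section Instance.
Variables (R : realFieldType) (m n : nat) (I : instance R m n).
Hypothesis vI : valid_instance I.

Lemma disc_le_rho_max i : disc I i <= rho_max I.
Proof. exact: (le_bigmax 0 (fun i => disc I i) i). Qed.

Lemma rho_max_le1 : rho_max I <= 1.
Proof.
by apply: bigmax_le => [|i _]; [exact: ler01 | case: (vI i) => _ [_ [/andP []]]].
Qed.

Lemma value_ge0 i t : 0 <= value I i t.
Proof.
have [_ [bval_ge0 [/andP [_ disc_le1] _]]] := vI i.
by rewrite mulr_ge0 // exprn_ge0 // subr_ge0.
Qed.

Lemma valueDr i t d : (arr I i <= t)%N ->
  value I i (t + d)%N = value I i t * (1 - disc I i) ^+ d.
Proof. by move=> le_at; rewrite /value -mulrA -exprD; congr (_ * _ ^+ _); lia. Qed.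

Lemma value_discount i t d e : (arr I i <= t)%N -> (d <= e)%N ->
  (1 - rho_max I) ^+ e * value I i t <= value I i (t + d)%N.
Proof.
move=> le_at le_de; rewrite valueDr // mulrC ler_wpM2l ?value_ge0 //.
have [_ [_ [/andP [disc_ge0 disc_le1] _]]] := vI i.
apply: (@le_trans _ _ ((1 - rho_max I) ^+ d)).
  by apply: ler_wiXn2l le_de; rewrite ?subr_ge0 ?rho_max_le1 // lerBlDr lerDl
     (le_trans disc_ge0) ?disc_le_rho_max.
by apply: lerXn2r; rewrite ?nnegrE ?subr_ge0 ?rho_max_le1 //
   lerD2l lerN2 disc_le_rho_max.
Qed.

Lemma SW_ge0 x T : (forall i t, 0 <= x i t) -> 0 <= SW I x T.
Proof.
move=> x_ge0; rewrite sumr_ge0 // => t _; rewrite sumr_ge0 // => i _.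
by rewrite mulr_ge0 ?value_ge0.
Qed.

Lemma SW_mono x : (forall i t, 0 <= x i t) ->
  {homo SW I x : T1 T2 / (T1 <= T2)%N >-> T1 <= T2}.
Proof.
move=> x_ge0 T1 T2 le_T12; rewrite /SW [leRHS](big_cat_nat _ (n := T1.+1)) //=.
by rewrite lerDl sumr_ge0 // => t _; rewrite sumr_ge0 // => i _;
  rewrite mulr_ge0 ?value_ge0.
Qed.

Lemma avg_block_size_slack B D x j : (forall i t, 0 <= x i t) -> 0 < B j ->
  avg_block_size I B D x -> -1 <= D.
Proof.
move=> x_ge0 B_gt0 /(_ 1%N 1%N j isT isT); rewrite big_nat1 => sum_le.
have : 0 <= (1 + D) * B j.
  apply: le_trans sum_le; rewrite sumr_ge0 // => i _.
  by rewrite mulr_ge0 //; case: (vI i) => _ [_ [_]].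
by rewrite pmulr_lge0 // -lerBlDl sub0r.
Qed.

End Instance.

Definition stretch (V : nmodType) n L (x : 'I_n -> nat -> V) : 'I_n -> nat -> V :=
  fun i t => if (L %| t)%N then x i (t %/ L)%N else 0.

Definition batch_alloc (V : nmodType) n L (y : 'I_n -> nat -> V) : 'I_n -> nat -> V :=
  fun i k => \sum_((k.-1 * L)%N.+1 <= t < (k * L)%N.+1) y i t.

Section Batching.
Variables (R : realFieldType) (m n : nat) (I : instance R m n) (L : nat).
Hypotheses (vI : valid_instance I) (L_gt0 : (0 < L)%N).
Local Notation Ib := (batch_inst L I).

Lemma leq_batch_arr i k : (batch_arr L I i <= k)%N = (arr I i <= k * L)%N.
Proof. exact: leq_cdivnL. Qed.

Lemma batch_inst_valid : valid_instance Ib.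
Proof.
move=> i; have [arr_ge1 [bval_ge0 [/andP [disc_ge0 disc_le1] dem_ge0]]] := vI i.
have q_ge0 : 0 <= 1 - disc I i by rewrite subr_ge0.
have q_le1 : 1 - disc I i <= 1 by rewrite lerBlDr lerDl.
split; [|split; [|split]] => //=.
- by rewrite ltnNge leq_batch_arr mul0n -ltnNge.
- by rewrite mulr_ge0 // exprn_ge0.
- by rewrite subr_ge0 exprn_ile1 //= lerBlDr lerDl exprn_ge0.
Qed.

Lemma batch_inst_qmax B a :
  qmax_le I (fun j => B j / L%:R) (a * L%:R) -> qmax_le Ib B a.
Proof.
move=> q_le i j; have := q_le i j; rewrite invf_div mulrA mulrAC.
by rewrite ler_pM2r ?ltr0n.
Qed.

Lemma value_batch_inst i k : (batch_arr L I i <= k)%N ->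
  value Ib i k = value I i (k * L)%N.
Proof.
rewrite leq_batch_arr => le_ak; rewrite /value /=.
have -> : 1 - (1 - (1 - disc I i) ^+ L) = (1 - disc I i) ^+ L by ring.
rewrite -exprM -mulrA -exprD; congr (_ * _ ^+ _).
have le_ck : (cdivn L (arr I i) <= k)%N by rewrite leq_cdivnL.
have := cdivnM_ge L_gt0 (arr I i); have := leq_mul le_ck (leqnn L).
rewrite /batch_arr -/(cdivn L _) mulnBr; lia.
Qed.

Lemma stretch_allocation b x :
  is_allocation b Ib x -> is_allocation b I (stretch L x).
Proof.
move=> [x01 [x_int [x_early x_sum]]]; split; [|split; [|split]].
- by move=> i t; rewrite /stretch; case: ifP => _; [exact: x01 | rewrite lexx ler01].
- by move=> b_int i t; rewrite /stretch; case: ifP => _; [exact: x_int | left].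
- move=> i t lt_ta; rewrite /stretch; case: ifP => // /dvdnP [q t_eq]; apply: x_early.
  by rewrite t_eq mulnK //= ltnNge leq_batch_arr -ltnNge -t_eq.
- move=> i N; rewrite -(big_mkord xpredT (fun t => stretch L x i t)) sum_on_multiples //.
  by rewrite cdiv0n // big_mkord; exact: x_sum.
Qed.

Lemma stretch_avg_block_size B D x :
  (forall j, 0 < B j) -> (forall i t, 0 <= x i t) -> avg_block_size Ib B D x ->
  avg_block_size I (fun j => B j / L%:R) ((D + 1) * L%:R) (stretch L x).
Proof.
move=> B_gt0 x_ge0 avg_x T0 K j T0_ge1 K_ge1.
have D_ge := avg_block_size_slack batch_inst_valid x_ge0 (B_gt0 j) avg_x.
have L_gt0R : 0 < L%:R :> R by rewrite ltr0n.
have L_neq0 := lt0r_neq0 L_gt0R.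
have KL_ge0 : 0 <= K%:R / L%:R :> R by rewrite divr_ge0.
rewrite (eq_bigr (fun t => if (L %| t)%N then \sum_i x i (t %/ L)%N * dem I i j else 0)).
  2: by move=> t _; rewrite /stretch; case: ifP => // _; rewrite big1 // => i _;
        rewrite mul0r.
rewrite (sum_on_multiples L_gt0 (fun k => \sum_i x i k * dem I i j)) ?leq_addr //.
have -> : (K%:R + (D + 1) * L%:R) * (B j / L%:R) = (K%:R / L%:R + 1 + D) * B j.
  by field.
set k0 := cdivn L T0; set k1 := cdivn L (T0 + K).
(* The window may contain no multiple of L at all: this case needs D >= -1. *)
have [le_k10 | lt_k01] := leqP k1 k0.
  by rewrite big_geq // mulr_ge0 ?(ltW (B_gt0 j)) //; lra.
have k0_ge1 : (0 < k0)%N by rewrite ltnNge leq_cdivnL // -ltnNge.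
have := avg_x k0 (k1 - k0)%N j k0_ge1; rewrite subn_gt0 subnKC; last exact: ltnW.
move=> /(_ lt_k01) /le_trans; apply; rewrite ler_pM2r // lerD2r.
have span : ((k1 - k0) * L <= K + L)%N.
  have := cdivnM_le L (T0 + K); have := cdivnM_ge L_gt0 T0.
  by rewrite mulnBl -/k0 -/k1; lia.
by rewrite -(ler_pM2r L_gt0R) mulrDl divfK // mul1r -natrM -natrD ler_nat.
Qed.

Lemma SW_stretch x K : (forall i k, (k < batch_arr L I i)%N -> x i k = 0) ->
  SW I (stretch L x) (K * L)%N = SW Ib x K.
Proof.
move=> x_early; rewrite /SW.
rewrite (eq_bigr (fun t => if (L %| t)%N
                    then \sum_i x i (t %/ L)%N * value I i (t %/ L * L) else 0)).
  rewrite (sum_on_multiples L_gt0 (fun k => \sum_i x i k * value I i (k * L))) //.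
  rewrite !cdivnS // cdiv0n // cdivn_mulnK // dvdn0 dvdn_mull //.
  rewrite add0n addn1; apply: eq_big_nat => k _; apply: eq_bigr => i _.
  have [lt_ka | le_ak] := ltnP k (batch_arr L I i).
    by rewrite x_early // !mul0r.
  by rewrite value_batch_inst.
move=> t _; rewrite /stretch; case: ifP => [/divnK -> // | _].
by rewrite big1 // => i _; rewrite mul0r.
Qed.

Lemma batch_alloc_allocation b y :
  is_allocation b I y -> is_allocation b Ib (batch_alloc L y).
Proof.
move=> [y01 [y_int [y_early y_sum]]].
have y_ge0 i t : 0 <= y i t by case/andP: (y01 i t).
have window_le1 i lo hi : \sum_(lo <= t < hi) y i t <= 1.
  have [le_lohi | lt_hilo] := leqP lo hi; last by rewrite big_geq ?ler01 // ltnW.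
  apply: le_trans (y_sum i hi); rewrite -(big_mkord xpredT).
  by rewrite (big_cat_nat (leq0n lo) le_lohi) /= lerDr sumr_ge0.
have window_ge0 i k : 0 <= batch_alloc L y i k by rewrite sumr_ge0.
split; [|split; [|split]].
- by move=> i k; rewrite window_ge0 window_le1.
- by move=> b_int i k; apply: sum_zero_one => [t|]; [exact: y_int | exact: window_le1].
- move=> i k /=; rewrite ltnNge leq_batch_arr -ltnNge => lt_ka.
  rewrite /batch_alloc big_nat big1 // => t /andP [_ le_t]; apply: y_early.
  by move: lt_ka le_t; lia.
- move=> i N; apply: (@le_trans _ _ (\sum_(k < N.+1) batch_alloc L y i k)).
    by rewrite big_ord_recr lerDl.
  have window0 : batch_alloc L y i 0 = 0 by rewrite /batch_alloc big_geq.
  rewrite -(big_mkord xpredT) big_ltn // window0 add0r.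
  by rewrite /batch_alloc -sum_nat_blocks window_le1.
Qed.

Lemma batch_alloc_respects B y : (forall j, 0 <= B j) ->
  respects_limits I (fun j => B j / L%:R) y ->
  respects_limits Ib B (batch_alloc L y).
Proof.
move=> B_ge0 y_lim k j /=; rewrite /batch_alloc.
under eq_bigr do rewrite mulr_sumr.
rewrite exchange_big /=; apply: le_trans (ler_sum _ (fun t _ => y_lim t j)) _.
rewrite sumr_const_nat; case: k => [|k]; first by rewrite mulr0n.
by rewrite /= mulSn subSS addnK -[leLHS]mulr_natr divfK // pnatr_eq0 -lt0n.
Qed.

Lemma SW_batch_alloc y K : (forall i t, 0 <= y i t) ->
  (forall i t, (t < arr I i)%N -> y i t = 0) ->
  (1 - rho_max I) ^+ L.-1 * SW I y (K * L)%N <= SW Ib (batch_alloc L y) K.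
Proof.
move=> y_ge0 y_early; rewrite /SW sum_nat_blocks mulr_sumr.
apply: ler_sum_nat => -[//|k] _; rewrite mulr_sumr /batch_alloc.
under [leRHS]eq_bigr do rewrite mulr_suml.
rewrite [leRHS]exchange_big /=; apply: ler_sum_nat => t /andP [lt_t le_t].
rewrite mulr_sumr; apply: ler_sum => i _.
have [lt_ta | le_at] := ltnP t (arr I i); first by rewrite y_early // !mul0r mulr0.
rewrite value_batch_inst; last by rewrite leq_batch_arr (leq_trans le_at) // -ltnS.
have le_tk : (t <= k.+1 * L)%N by rewrite -ltnS.
rewrite mulrCA ler_wpM2l // -(subnKC le_tk).
by apply: value_discount => //; move: lt_t; rewrite mulSn; lia.
Qed.

Lemma stretch_welfare bx b B lt Gt x y T :
  (forall j, 0 < B j) -> is_allocation bx Ib x ->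
  (forall T' y', is_allocation b Ib y' -> respects_limits Ib B y' ->
     lt * SW Ib y' T' <= SW Ib x (T' + Gt)) ->
  is_allocation b I y -> respects_limits I (fun j => B j / L%:R) y ->
  (1 - rho_max I) ^+ L.-1 * lt * SW I y T
    <= SW I (stretch L x) (T + (Gt + 1) * L).
Proof.
move=> B_gt0 [x01 [_ [x_early _]]] x_opt ya y_lim.
have [y01 [_ [y_early _]]] := ya.
have y_ge0 i t : 0 <= y i t by case/andP: (y01 i t).
have sx_ge0 i t : 0 <= stretch L x i t.
  by rewrite /stretch; case: ifP => // _; case/andP: (x01 i (t %/ L)%N).
have c_ge0 : 0 <= (1 - rho_max I) ^+ L.-1.
  by rewrite exprn_ge0 // subr_ge0 rho_max_le1.
have [lt_ge0 | lt_lt0] := lerP 0 lt; last first.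
  apply: le_trans (SW_ge0 vI _ sx_ge0).
  rewrite -mulrA; apply: mulr_ge0_le0 => //.
  by apply: mulr_le0_ge0; [exact: ltW | exact: SW_ge0].
set K := cdivn L T.
apply: (@le_trans _ _ (lt * SW Ib (batch_alloc L y) K)).
  rewrite -mulrA mulrCA ler_wpM2l //.
  apply: le_trans (SW_batch_alloc K y_ge0 y_early); rewrite ler_wpM2l //.
  by apply: (SW_mono vI y_ge0); exact: cdivnM_ge.
have B_ge0 j : 0 <= B j by apply: ltW.
have ya_b := batch_alloc_allocation ya.
apply: le_trans (x_opt K _ ya_b (batch_alloc_respects B_ge0 y_lim)) _.
rewrite -SW_stretch //; apply: (SW_mono vI sx_ge0).
by have := cdivnM_le L T; rewrite -/K; lia.
Qed.

End Batching.

Theorem lemma9 (R : realFieldType) (m : nat) (L : nat) (alpha : R)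
    (ALG : algorithm R m) (Bt : 'I_m -> R) (Dt : R) (Gt : nat) (lt : R)
    (integ : bool) :
  (0 < L)%N -> 0 < alpha -> (forall j, 0 < Bt j) ->
  online ALG ->
  (forall n (I : instance R m n), valid_instance I ->
     is_allocation false I (ALG n I)) ->
  (forall n (I : instance R m n), valid_instance I -> qmax_le I Bt alpha ->
     avg_block_size I Bt Dt (ALG n I) /\
     (forall (T : nat) (y : 'I_n -> nat -> R),
        is_allocation integ I y -> respects_limits I Bt y ->
        lt * SW I y T <= SW I (ALG n I) (T + Gt))) ->
  forall n (I : instance R m n), valid_instance I ->
    qmax_le I (fun j => Bt j / L%:R) (alpha * L%:R) ->
    is_allocation false I (batching ALG L I) /\
    avg_block_size I (fun j => Bt j / L%:R) ((Dt + 1) * L%:R)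
      (batching ALG L I) /\
    (forall (T : nat) (y : 'I_n -> nat -> R),
       is_allocation integ I y -> respects_limits I (fun j => Bt j / L%:R) y ->
       (1 - rho_max I) ^+ L.-1 * lt * SW I y T
         <= SW I (batching ALG L I) (T + (Gt + 1) * L)).
Proof.
move=> L_gt0 _ Bt_gt0 _ ALG_alloc ALG_spec n I vI q_le.
have vIb := batch_inst_valid vI L_gt0.
have x_alloc := ALG_alloc n _ vIb.
have [x_avg x_opt] := ALG_spec n _ vIb (batch_inst_qmax L_gt0 q_le).
split; [|split].
- exact: (stretch_allocation L_gt0 x_alloc).
- apply: stretch_avg_block_size x_avg => // i t.
  by case: x_alloc => /(_ i t) /andP [].
- by move=> T y; exact: (stretch_welfare vI L_gt0 T Bt_gt0 x_alloc x_opt).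
Qed.
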